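(* Let $\chi>0$, $\phi\in C^1(\mathbb{R})$ with $\phi'>0$, $\phi(0)>0$, and $g\in C^1([0,\infty))$ positive with exactly one $\beta>0$ such that $g'<0$ on $[0,\beta)$ and $g'>0$ on $(\beta,\infty)$. Let $g(\beta)<u_-<\min\{g(0),\lim_{V\to\infty}g(V)\}$ and $0<v_+<\beta<v_-$ with $g(v_\pm)=u_-$. Define $J(V)=V(g(V)-u_-)$ on $[0,v_+]$, $Q(V)=(v_--V)^2\inf_{z\in(V,v_-]}g'(z)$ on $(\beta,v_-)$, $$s_1:=\chi\Big(1-\frac{u_-}{g(\beta)}\Big)^{-1}\Big[\phi\Big(-\sqrt{\tfrac{1}{v_+}\textstyle\int_0^{v_+}J}\Big)-\frac{u_-\phi(0)}{g(\beta)}\Big],\quad s_2:=\chi\Big(1-\frac{u_-}{g(0)}\Big)^{-1}\Big[\phi\Big(\sqrt{\tfrac{1}{v_--\beta}\textstyle\int_\beta^{v_-}Q}\Big)-\frac{u_-\phi(0)}{g(0)}\Big],$$ $s_*=\min\{s_1,s_2\}$, and $B(V)=\frac{s}{\chi}+\frac{u_-}{g(V)}\big(\phi(0)-\frac{s}{\chi}\big)$. If $\chi\phi(0)<s<s_*$, then there exist $v_*\in(0,v_+)$ and $v^*\in(\beta,v_-)$ such that $-\sqrt{J(v_* )}<\phi^{-1}(B(\beta))<0$ and $0<\phi^{-1}(B(0))<\sqrt{Q(v^* )}$. *)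

From Stdlib Require Import Reals.
From Coquelicot Require Import Coquelicot.
Open Scope R_scope.

Definition Jfun (g : R -> R) (um : R) (V : R) : R := V * (g V - um).

Definition Qfun (dg : R -> R) (vm : R) (V : R) : R :=
  (vm - V) ^ 2 * real (Glb_Rbar (fun y => exists z, V < z <= vm /\ y = dg z)).

Definition s1 (chi : R) (phi g : R -> R) (um vp beta : R) : R :=
  chi * / (1 - um / g beta) *
  (phi (- sqrt (/ vp * RInt (Jfun g um) 0 vp)) - um * phi 0 / g beta).

Definition s2 (chi : R) (phi g dg : R -> R) (um vm beta : R) : R :=
  chi * / (1 - um / g 0) *
  (phi (sqrt (/ (vm - beta) * RInt (Qfun dg vm) beta vm)) - um * phi 0 / g 0).

Definition Bfun (chi s : R) (phi g : R -> R) (um : R) (V : R) : R :=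
  s / chi + um / g V * (phi 0 - s / chi).

From Stdlib Require Import Reals.
From Coquelicot Require Import Coquelicot.
From Stdlib Require Import Lra Classical.
Open Scope R_scope.

(* The speed bound s < s_* places B(beta) in (phi(-sqrt <J>), phi 0) and B(0) in
   (phi 0, phi(sqrt <Q>)), where <f> is the mean of f over the relevant interval.
   By the intermediate value theorem phi^-1(B(beta)) lies in (-sqrt <J>, 0) and
   phi^-1(B(0)) in (0, sqrt <Q>); a function exceeds somewhere every number below
   its mean, so some J(v_* ) (resp. Q(v^* )) exceeds the square of that preimage. *)

Lemma RInt_not_ex_RInt (f : R -> R) (a b : R) : ~ ex_RInt f a b -> RInt f a b = 0.
Proof.
intros Hnot. unfold RInt, iota, lim. simpl. unfold R_complete_lim.
match goal with |- real (Lub_Rbar ?E) = 0 =>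
  destruct (Lub_Rbar_correct E) as [Hub _]; destruct (Lub_Rbar E) as [r| |] end;
  simpl; auto.
exfalso.
assert (Hr : r + 1 <= r).
{ apply (Hub (r + 1)). intros y Hy. exfalso. apply Hnot. exists y. exact Hy. }
lra.
Qed.

Lemma RInt_mean_le (f : R -> R) (a b c : R) :
  a < b -> 0 <= c -> (forall x, a < x < b -> f x <= c) -> / (b - a) * RInt f a b <= c.
Proof.
intros Hab Hc Hf.
destruct (classic (ex_RInt f a b)) as [Hex | Hnot].
- assert (Hle : RInt f a b <= RInt (fun _ => c) a b).
  { apply RInt_le; auto; [lra | apply ex_RInt_const]. }
  rewrite RInt_const in Hle. unfold scal in Hle; simpl in Hle; unfold mult in Hle; simpl in Hle.
  apply Rmult_le_reg_l with (b - a); [lra |].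
  rewrite <- Rmult_assoc, Rinv_r by lra. lra.
- rewrite RInt_not_ex_RInt by exact Hnot. lra.
Qed.

Lemma exists_lt_sqrt_of_lt_sqrt_mean (f : R -> R) (a b w : R) :
  a < b -> 0 <= w -> w < sqrt (/ (b - a) * RInt f a b) ->
  exists v, a < v < b /\ w < sqrt (f v).
Proof.
intros Hab Hw Hmean.
destruct (classic (exists v, a < v < b /\ w * w < f v)) as [[v [Hv Hfv]] | Hnone].
- exists v. split; [exact Hv |].
  rewrite <- (sqrt_square w) at 1 by exact Hw.
  apply sqrt_lt_1_alt. split; nra.
- assert (Hle : / (b - a) * RInt f a b <= w * w).
  { apply RInt_mean_le; [exact Hab | nra |].
    intros x Hx. apply Rnot_lt_le. intro Hlt. apply Hnone. eauto. }
  apply sqrt_le_1_alt in Hle. rewrite sqrt_square in Hle by exact Hw. lra.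
Qed.

Lemma IVT_open (f : R -> R) (a b y : R) :
  (forall x, continuous f x) -> a <= b -> f a < y < f b -> exists w, a < w < b /\ f w = y.
Proof.
intros Hf Hab Hy.
destruct (IVT_gen_consistent f a b y Hf) as [w [Hw Hfw]].
{ split; [apply Rle_trans with (f a); [apply Rmin_l | lra]
        | apply Rle_trans with (f b); [lra | apply Rmax_r]]. }
rewrite Rmin_left, Rmax_right in Hw by exact Hab.
exists w. split; [| exact Hfw].
split; destruct (Req_dec w a); destruct (Req_dec w b); subst; lra.
Qed.

(* [s / chi + a * (p0 - s / chi)] is [Bfun] with [a = u_- / g(V)], [p0 = phi 0];
   [chi * / (1 - a) * (p - a * p0)] is the shape of [s1] and [s2]. *)
Lemma affine_speed_bounds_gt1 (chi s a p p0 : R) :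
  0 < chi -> 1 < a -> chi * p0 < s -> s < chi * / (1 - a) * (p - a * p0) ->
  p < s / chi + a * (p0 - s / chi) < p0.
Proof.
intros Hchi Ha Hs0 Hs.
set (t := s / chi).
assert (Hst : s = chi * t) by (unfold t; field; lra).
assert (Hk : (1 - a) * / (1 - a) = 1) by (apply Rinv_r; lra).
assert (Ht : t < / (1 - a) * (p - a * p0))
  by (apply Rmult_lt_reg_l with chi; [exact Hchi | rewrite <- Hst, <- Rmult_assoc; exact Hs]).
assert (Hmul : (1 - a) * (/ (1 - a) * (p - a * p0)) < (1 - a) * t)
  by (apply Rmult_lt_gt_compat_neg_l; lra).
rewrite <- Rmult_assoc, Hk in Hmul.
split; nra.
Qed.

Lemma affine_speed_bounds_lt1 (chi s a p p0 : R) :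
  0 < chi -> a < 1 -> chi * p0 < s -> s < chi * / (1 - a) * (p - a * p0) ->
  p0 < s / chi + a * (p0 - s / chi) < p.
Proof.
intros Hchi Ha Hs0 Hs.
set (t := s / chi).
assert (Hst : s = chi * t) by (unfold t; field; lra).
assert (Hk : (1 - a) * / (1 - a) = 1) by (apply Rinv_r; lra).
assert (Ht : t < / (1 - a) * (p - a * p0))
  by (apply Rmult_lt_reg_l with chi; [exact Hchi | rewrite <- Hst, <- Rmult_assoc; exact Hs]).
assert (Hmul : (1 - a) * t < (1 - a) * (/ (1 - a) * (p - a * p0)))
  by (apply Rmult_lt_compat_l; lra).
rewrite <- Rmult_assoc, Hk in Hmul.
split; nra.
Qed.

Lemma Rdiv_gt_1 (x y : R) : 0 < y -> y < x -> 1 < x / y.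
Proof. intros Hy Hxy. apply Rmult_lt_reg_r with y; [exact Hy |]. field_simplify; lra. Qed.

Lemma Rdiv_lt_1 (x y : R) : 0 < y -> x < y -> x / y < 1.
Proof. intros Hy Hxy. apply Rmult_lt_reg_r with y; [exact Hy |]. field_simplify; lra. Qed.

Theorem proposition2p10
  (chi : R) (phi dphi g dg : R -> R) (beta um vp vm s : R)
  (Hchi : 0 < chi)
  (* phi in C^1(R), phi' > 0, phi(0) > 0 *)
  (Hphi_der : forall x, is_derive phi x (dphi x))
  (Hdphi_cont : forall x, continuous dphi x)
  (Hdphi_pos : forall x, 0 < dphi x)
  (Hphi0 : 0 < phi 0)
  (* g in C^1([0,oo)) with derivative dg (one-sided at 0), g > 0 *)
  (Hg_der : forall x, 0 < x -> is_derive g x (dg x))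
  (Hg_der0 : filterlim (fun h => (g h - g 0) / h) (at_right 0) (locally (dg 0)))
  (Hdg_cont : forall x, 0 < x -> continuous dg x)
  (Hdg_cont0 : filterlim dg (at_right 0) (locally (dg 0)))
  (Hg_pos : forall x, 0 <= x -> 0 < g x)
  (* beta *)
  (Hbeta : 0 < beta)
  (Hdg_neg : forall x, 0 <= x < beta -> dg x < 0)
  (Hdg_pos : forall x, beta < x -> 0 < dg x)
  (* u_- *)
  (Hum1 : g beta < um)
  (Hum2 : um < g 0)
  (Hum3 : Rbar_lt (Finite um) (Lim g p_infty))
  (* v_+- *)
  (Hv : 0 < vp < beta /\ beta < vm)
  (Hgvp : g vp = um) (Hgvm : g vm = um)
  (* speed *)
  (Hs : chi * phi 0 < s /\ s < Rmin (s1 chi phi g um vp beta) (s2 chi phi g dg um vm beta)) :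
  (exists vs, 0 < vs < vp /\
     exists w, phi w = Bfun chi s phi g um beta /\ - sqrt (Jfun g um vs) < w < 0) /\
  (exists vS, beta < vS < vm /\
     exists w, phi w = Bfun chi s phi g um 0 /\ 0 < w < sqrt (Qfun dg vm vS)).
Proof.
destruct Hs as [Hs0 Hs].
assert (Hs1 := Rlt_le_trans _ _ _ Hs (Rmin_l _ _)).
assert (Hs2 := Rlt_le_trans _ _ _ Hs (Rmin_r _ _)).
unfold s1 in Hs1; unfold s2 in Hs2; unfold Bfun.
replace (um * phi 0 / g beta) with (um / g beta * phi 0) in Hs1 by (unfold Rdiv; ring).
replace (um * phi 0 / g 0) with (um / g 0 * phi 0) in Hs2 by (unfold Rdiv; ring).
assert (Hphi : forall x, continuous phi x)
  by (intro x; apply (@ex_derive_continuous R_AbsRing R_NormedModule); exists (dphi x); apply Hphi_der).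
split.
- destruct (affine_speed_bounds_gt1 chi s (um / g beta) _ (phi 0) Hchi
    (Rdiv_gt_1 _ _ (Hg_pos beta (Rlt_le _ _ Hbeta)) Hum1) Hs0 Hs1) as [Hlo Hhi].
  set (rJ := sqrt (/ vp * RInt (Jfun g um) 0 vp)) in Hlo.
  assert (HrJ : 0 <= rJ) by apply sqrt_pos.
  destruct (IVT_open phi (- rJ) 0 _ Hphi ltac:(lra) (conj Hlo Hhi)) as [w [Hw Hpw]].
  destruct (exists_lt_sqrt_of_lt_sqrt_mean (Jfun g um) 0 vp (- w)) as [v [Hv' Hwv]];
    [lra | lra | rewrite Rminus_0_r; fold rJ; lra |].
  exists v. split; [exact Hv' |]. exists w. split; [exact Hpw | lra].
- destruct (affine_speed_bounds_lt1 chi s (um / g 0) _ (phi 0) Hchi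
    (Rdiv_lt_1 _ _ (Hg_pos 0 (Rle_refl 0)) Hum2) Hs0 Hs2) as [Hlo Hhi].
  set (rQ := sqrt (/ (vm - beta) * RInt (Qfun dg vm) beta vm)) in Hhi.
  assert (HrQ : 0 <= rQ) by apply sqrt_pos.
  destruct (IVT_open phi 0 rQ _ Hphi HrQ (conj Hlo Hhi)) as [w [Hw Hpw]].
  destruct (exists_lt_sqrt_of_lt_sqrt_mean (Qfun dg vm) beta vm w) as [v [Hv' Hwv]];
    [lra | lra | fold rQ; lra |].
  exists v. split; [exact Hv' |]. exists w. split; [exact Hpw | lra].
Qed.
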